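(* Let $\mathsf{K}$ be a non-trivial logical class contained in $\mathsf{uSL}_\infty$. Then either $\mathsf{uSL}_\omega\subseteq\mathsf{K}$ or $\mathsf{K}=\mathsf{uSL}_n$ for some integer $n\ge1$. Consequently the only non-trivial proper finitary logical classes contained in $\mathsf{uSL}_\infty$ are the classes $\mathsf{uSL}_n$, $n\ge1$.
   Context: A unital meet semilattice is an algebra $\langle S,\wedge,1\rangle$ with $1$ the top element. Structures are pairs $\langle\mathbf{S},F\rangle$ with $\mathbf{S}$ a unital meet semilattice and $F\subseteq\mathbf{S}$. A homomorphism $h\colon\langle\mathbf{A},F\rangle\to\langle\mathbf{B},G\rangle$ is strict if $F=h^{-1}[G]$. A logical class is a class closed under isomorphism, substructures, products $\langle\prod\mathbf{A}_i,\prod F_i\rangle$, strict homomorphic preimages and strict homomorphic images (along surjective strict homomorphisms); it is finitary if closed under ultraproducts, and trivial if all members have $F=\mathbf{S}$. For a set $X$, $Y\subseteq_nX$ means $Y$ non-empty, $Y\subseteq X$, $|Y|\le n$. An $n$-filter is an upset $F$ such that for every non-empty finite $X\subseteq F$, if $\bigwedge Y\in F$ for all $Y\subseteq_nX$ then $\bigwedge X\in F$. $\mathsf{uSL}_\infty$ consists of all $\langle\mathbf{S},F\rangle$ with $F$ a non-empty upset; $\mathsf{uSL}_n$ those with $F$ a non-empty $n$-filter; $\mathsf{uSL}_\omega$ those with $F$ a non-empty residually finite upset, i.e. an intersection of sets $h^{-1}[G]$ with $h$ a unital semilattice homomorphism into a finite unital meet semilattice and $G$ an upset there. *)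

From Stdlib Require Import List FunctionalExtensionality.
Import ListNotations.

Record uSL := {
  car :> Type;
  meet : car -> car -> car;
  one : car;
  meetA : forall x y z, meet x (meet y z) = meet (meet x y) z;
  meetC : forall x y, meet x y = meet y x;
  meetI : forall x, meet x x = x;
  meet1 : forall x, meet x one = x
}.
Arguments meet {u}.
Arguments one {u}.

Definition le {A : uSL} (x y : A) : Prop := meet x y = x.

Definition meets {A : uSL} (l : list A) : A := fold_right meet one l.

Definition upset {A : uSL} (F : A -> Prop) : Prop :=
  forall x y, F x -> le x y -> F y.

Definition is_hom {A B : uSL} (h : A -> B) : Prop :=
  (forall x y, h (meet x y) = meet (h x) (h y)) /\ h one = one.

Definition strict {A B : uSL} (h : A -> B) (F : A -> Prop) (G : B -> Prop) : Prop :=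
  forall x, F x <-> G (h x).

Definition surj {X Y : Type} (f : X -> Y) : Prop := forall y, exists x, f x = y.
Definition inj {X Y : Type} (f : X -> Y) : Prop := forall x y, f x = f y -> x = y.

Section Prod.
Variables (I : Type) (A : I -> uSL).
Definition pmeet (a b : forall i, A i) : forall i, A i := fun i => meet (a i) (b i).
Definition pone : forall i, A i := fun i => one.
Lemma pmeetA a b c : pmeet a (pmeet b c) = pmeet (pmeet a b) c.
Proof. apply functional_extensionality_dep; intro i; apply meetA. Qed.
Lemma pmeetC a b : pmeet a b = pmeet b a.
Proof. apply functional_extensionality_dep; intro i; apply meetC. Qed.
Lemma pmeetI a : pmeet a a = a.
Proof. apply functional_extensionality_dep; intro i; apply meetI. Qed.
Lemma pmeet1 a : pmeet a pone = a.
Proof. apply functional_extensionality_dep; intro i; apply meet1. Qed.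
Definition prod_uSL : uSL :=
  {| car := forall i, A i; meet := pmeet; one := pone;
     meetA := pmeetA; meetC := pmeetC; meetI := pmeetI; meet1 := pmeet1 |}.
End Prod.

Definition cls := forall A : uSL, (A -> Prop) -> Prop.

Definition subclass (K L : cls) : Prop := forall A F, K A F -> L A F.
Definition same_class (K L : cls) : Prop := forall A F, K A F <-> L A F.

Definition ultrafilter {I : Type} (U : (I -> Prop) -> Prop) : Prop :=
  ~ U (fun _ => False) /\
  (forall X Y : I -> Prop, U X -> (forall i, X i -> Y i) -> U Y) /\
  (forall X Y : I -> Prop, U X -> U Y -> U (fun i => X i /\ Y i)) /\
  (forall X : I -> Prop, U X \/ U (fun i => ~ X i)).

Definition logical (K : cls) : Prop :=
  (forall (A B : uSL) F G (h : A -> B), is_hom h -> inj h -> surj h ->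
      strict h F G -> K A F -> K B G) /\
  (* substructures (given by an embedding e : B -> A, with F restricted) *)
  (forall (A B : uSL) F G (e : B -> A), is_hom e -> inj e ->
      strict e G F -> K A F -> K B G) /\
  (forall (I : Type) (A : I -> uSL) (F : forall i, A i -> Prop),
      (forall i, K (A i) (F i)) ->
      K (prod_uSL I A) (fun a => forall i, F i (a i))) /\
  (forall (A B : uSL) F G (h : A -> B), is_hom h -> strict h F G -> K B G -> K A F) /\
  (forall (A B : uSL) F G (h : A -> B), is_hom h -> surj h ->
      strict h F G -> K A F -> K B G).

(** Closure under ultraproducts: <B,G> is (isomorphic to) the ultraproduct of
    the <A i, F i> modulo U, presented by the surjective quotient map q. *)
Definition finitary (K : cls) : Prop :=
  forall (I : Type) (A : I -> uSL) (F : forall i, A i -> Prop)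
         (U : (I -> Prop) -> Prop) (B : uSL) (G : B -> Prop)
         (q : prod_uSL I A -> B),
    ultrafilter U -> (forall i, K (A i) (F i)) ->
    is_hom q -> surj q ->
    (forall a b, q a = q b <-> U (fun i => a i = b i)) ->
    (forall a, G (q a) <-> U (fun i => F i (a i))) ->
    K B G.

Definition trivial_cls (K : cls) : Prop := forall A F, K A F -> forall x, F x.

(** n-filters; finite sets X are given by (non-empty) lists. *)
Definition n_filter (n : nat) {A : uSL} (F : A -> Prop) : Prop :=
  upset F /\
  forall xs : list A, xs <> [] -> (forall x, In x xs -> F x) ->
    (forall ys : list A, ys <> [] -> (forall y, In y ys -> In y xs) ->
       length ys <= n -> F (meets ys)) ->
    F (meets xs).

Definition finite_uSL (B : uSL) : Prop := exists l : list B, forall b, In b l.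

Definition res_finite_upset {A : uSL} (F : A -> Prop) : Prop :=
  exists (J : Type) (B : J -> uSL) (h : forall j, A -> B j) (G : forall j, B j -> Prop),
    (forall j, finite_uSL (B j)) /\ (forall j, is_hom (h j)) /\
    (forall j, upset (G j)) /\
    (forall x, F x <-> forall j, G j (h j x)).

Definition uSL_inf : cls := fun A F => (exists x, F x) /\ upset F.
Definition uSL_n (n : nat) : cls := fun A F => (exists x, F x) /\ n_filter n F.
Definition uSL_omega : cls := fun A F => (exists x, F x) /\ res_finite_upset F.

(* Everything is controlled by the structures [B_n]: the subsets of [nat] under
   union (so ordered by reverse inclusion) with the filter of sets missing one of
   [0, ..., n-1].  For a logical class [K]:
   - if [B_n] is in [K] then so is all of [uSL_n]: an upset generated by [n]
     elements is a strict preimage of [B_n], and an n-filter, lifted to the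
     semilattice of finite subsets, becomes a strict preimage of a power of
     [B_n], from which it is recovered as a strict image;
   - a member of [K] whose filter is not an m-filter yields, through a minimal
     failing family, some [B_c] with [c > m] in [K]; non-triviality yields [B_1].
   So either [K = uSL_n] for the least [n] with [K] inside [uSL_n], or [K]
   contains every [B_n].  In the latter case [K] contains [uSL_omega], whose
   filters are strict preimages of products of finitely generated upsets, and,
   if finitary, all of [uSL_inf]: an upset is a strict preimage of an
   ultraproduct of its finitely generated approximations. *)

From Stdlib Require Import List Arith Lia Classical ClassicalEpsilon
  FunctionalExtensionality PropExtensionality ProofIrrelevance FinFun Wf_nat.
From mathcomp Require classical_sets filter.
Import ListNotations.

Arguments meetA {u}.
Arguments meetC {u}.
Arguments meetI {u}.
Arguments meet1 {u}.

Section Semilattice.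
Context {A : uSL}.
Implicit Types (x y z : A) (l xs ys : list A) (F : A -> Prop).

Lemma one_meet x : meet one x = x.
Proof. rewrite meetC; apply meet1. Qed.

Lemma sl_le_refl x : le x x.
Proof. apply meetI. Qed.

Lemma sl_le_one x : le x one.
Proof. apply meet1. Qed.

Lemma sl_le_antisym x y : le x y -> le y x -> x = y.
Proof. unfold le; intros Hxy Hyx. rewrite <- Hxy, meetC. exact Hyx. Qed.

Lemma sl_le_trans x y z : le x y -> le y z -> le x z.
Proof. unfold le; intros Hxy Hyz. rewrite <- Hxy at 1. rewrite <- meetA, Hyz. exact Hxy. Qed.

Lemma le_one_eq x : le one x -> x = one.
Proof. intro H; apply sl_le_antisym; auto using sl_le_one. Qed.

Lemma meet_le_l x y : le (meet x y) x.
Proof. unfold le; now rewrite (meetC x y), <- meetA, meetI. Qed.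

Lemma meet_le_r x y : le (meet x y) y.
Proof. unfold le; now rewrite <- meetA, meetI. Qed.

Lemma le_meet_iff x y z : le z (meet x y) <-> le z x /\ le z y.
Proof.
  split.
  - intro H; split; eapply sl_le_trans; eauto using meet_le_l, meet_le_r.
  - unfold le; intros [Hx Hy]. now rewrite meetA, Hx.
Qed.

Lemma meets_app xs ys : meets (xs ++ ys) = meet (meets xs) (meets ys).
Proof. induction xs as [|x xs IH]; simpl; [now rewrite one_meet|now rewrite IH, meetA]. Qed.

Lemma le_meets z l : le z (meets l) <-> forall x, In x l -> le z x.
Proof.
  induction l as [|a l IH]; simpl.
  - split; [tauto|intros _; apply sl_le_one].
  - rewrite le_meet_iff, IH; firstorder congruence.
Qed.

Lemma meets_le x l : In x l -> le (meets l) x.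
Proof. intro Hx; exact (proj1 (le_meets _ l) (sl_le_refl _) x Hx). Qed.

Lemma meets_incl xs ys : incl ys xs -> le (meets xs) (meets ys).
Proof. intro H; apply le_meets; intros y Hy; apply meets_le, H, Hy. Qed.

Lemma upset_one F x : upset F -> F x -> F one.
Proof. intros HF Fx; exact (HF x one Fx (sl_le_one x)). Qed.

Lemma upset_meets F l x : upset F -> F (meets l) -> In x l -> F x.
Proof. intros HF Fl Hx; exact (HF _ _ Fl (meets_le x l Hx)). Qed.

Lemma meets_map_meet {T : Type} (f g : T -> A) (ts : list T) :
  meets (map (fun t => meet (f t) (g t)) ts) = meet (meets (map f ts)) (meets (map g ts)).
Proof.
  induction ts as [|t ts IH]; simpl; [symmetry; apply meet1|].
  rewrite IH, <- !meetA; f_equal. rewrite !meetA; f_equal; apply meetC.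
Qed.

Lemma meets_map_one {T : Type} (ts : list T) : meets (map (fun _ => @one A) ts) = one.
Proof. induction ts as [|t ts IH]; simpl; [reflexivity|now rewrite IH, meet1]. Qed.

End Semilattice.

Lemma hom_meets {A B : uSL} (h : A -> B) l : is_hom h -> h (meets l) = meets (map h l).
Proof. intros [Hm H1]; induction l as [|a l IH]; simpl; [exact H1|now rewrite Hm, IH]. Qed.

Lemma hom_le {A B : uSL} (h : A -> B) x y : is_hom h -> le x y -> le (h x) (h y).
Proof. intros [Hm _] H; unfold le in *; now rewrite <- Hm, H. Qed.

Lemma hom_into_prod {A : uSL} {J : Type} (B : J -> uSL) (h : forall j, A -> B j) :
  (forall j, is_hom (h j)) -> @is_hom A (prod_uSL J B) (fun x j => h j x).
Proof.
  intro Hh; split; [intros x y|]; apply functional_extensionality_dep; intro j;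
    [apply (proj1 (Hh j))|apply (proj2 (Hh j))].
Qed.

Lemma lift_incl_map {X Y : Type} (f : X -> Y) (xs : list X) (ys' : list Y) :
  incl ys' (map f xs) -> exists ys, map f ys = ys' /\ incl ys xs.
Proof.
  induction ys' as [|b ys' IH]; intro H; [now exists []|].
  destruct IH as [ys [<- Hys]]; [intros y Hy; apply H; now right|].
  destruct (proj1 (in_map_iff f xs b) (H b (or_introl eq_refl))) as [a [<- Ha]].
  exists (a :: ys); split; [reflexivity|now apply incl_cons].
Qed.

Lemma lift_surj {X Y : Type} (f : X -> Y) (ys : list Y) : surj f -> exists xs, map f xs = ys.
Proof.
  intro Hf; induction ys as [|b ys [xs <-]]; [now exists []|].
  destruct (Hf b) as [a <-]; now exists (a :: xs).
Qed.

Lemma list_sep {T : Type} (P : T -> Prop) (l : list T) :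
  exists l', forall t, In t l' <-> In t l /\ P t.
Proof.
  induction l as [|a l [l' IH]]; [exists []; simpl; tauto|].
  destruct (classic (P a)); [exists (a :: l')|exists l']; intro t; simpl; rewrite ?IH;
    intuition congruence.
Qed.

Lemma least_nat (P : nat -> Prop) n : P n -> exists m, P m /\ forall k, P k -> m <= k.
Proof.
  intro Hn; destruct (dec_inh_nat_subset_has_unique_least_element P (fun k => classic (P k)))
    as [m [Hm _]]; eauto.
Qed.

(** * The test structures [B_n] *)

Definition bor (a b : nat -> bool) : nat -> bool := fun i => orb (a i) (b i).

Lemma borA a b c : bor a (bor b c) = bor (bor a b) c.
Proof. apply functional_extensionality; intro i; apply Bool.orb_assoc. Qed.
Lemma borC a b : bor a b = bor b a.
Proof. apply functional_extensionality; intro i; apply Bool.orb_comm. Qed.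
Lemma borI a : bor a a = a.
Proof. apply functional_extensionality; intro i; apply Bool.orb_diag. Qed.
Lemma bor0 a : bor a (fun _ => false) = a.
Proof. apply functional_extensionality; intro i; apply Bool.orb_false_r. Qed.

(* [a : Bits] encodes the subset [{i | a i = true}]; [B_n] is [<Bits, Bits_filter n>]. *)
Definition Bits : uSL :=
  {| car := nat -> bool; meet := bor; one := fun _ => false;
     meetA := borA; meetC := borC; meetI := borI; meet1 := bor0 |}.

Definition Bits_filter (n : nat) (a : Bits) : Prop := exists i, i < n /\ a i = false.

Lemma Bits_meets (l : list Bits) i : meets l i = true <-> exists a, In a l /\ a i = true.
Proof.
  induction l as [|a l IH]; simpl.
  - split; [discriminate|now intros [? []]].
  - unfold bor; rewrite Bool.orb_true_iff, IH; split.
    + intros [H|[b [Hb Hbi]]]; eauto.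
    + intros [b [[<-|Hb] Hbi]]; eauto.
Qed.

Lemma Bits_filter_upset n : upset (Bits_filter n).
Proof.
  intros a b [i [Hi Ha]] Hab; exists i; split; [exact Hi|].
  apply (f_equal (fun c => c i)) in Hab; simpl in Hab; unfold bor in Hab.
  rewrite Ha in Hab; now destruct (b i).
Qed.

Lemma uSL_n_Bits n : 1 <= n -> uSL_n n Bits (Bits_filter n).
Proof.
  intro Hn; split; [exists (@one Bits), 0; split; [lia|reflexivity]|].
  split; [apply Bits_filter_upset|].
  intros xs _ _ Hsmall; apply NNPP; intro Hxs.
  assert (Hcover : forall i, i < n -> exists a, In a xs /\ a i = true).
  { intros i Hi; apply Bits_meets.
    destruct (meets xs i) eqn:E; [reflexivity|now contradict Hxs; exists i]. }
  (* one witness per coordinate [i < n] gives a subfamily of size [n] outside the filter *)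
  assert (Hpick : forall k, k <= n -> exists ys, length ys = k /\ incl ys xs /\
                    forall i, i < k -> meets ys i = true).
  { induction k as [|k IH]; intro Hk; [exists []; repeat split; [apply incl_nil_l|lia]|].
    destruct IH as [ys [Hlen [Hys Htrue]]]; [lia|].
    destruct (Hcover k) as [a [Ha Hak]]; [lia|].
    exists (a :: ys); repeat split; [simpl; f_equal; exact Hlen|now apply incl_cons|].
    intros i Hi; simpl; unfold bor; apply Bool.orb_true_iff.
    destruct (Nat.eq_dec i k) as [->|]; [now left|right; apply Htrue; lia]. }
  destruct (Hpick n (le_n n)) as [ys [Hlen [Hys Htrue]]].
  destruct (Hsmall ys) as [i [Hi Hf]]; [destruct ys; simpl in *; [lia|discriminate]|exact Hys|lia|].
  now rewrite Htrue in Hf.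
Qed.

Definition unit_bits (j : nat) : Bits := fun i => Nat.eqb i j.

(* The unit vectors [0..n] witness the failure: any [n] of them miss a coordinate. *)
Lemma Bits_filter_not_n_filter n : 1 <= n -> ~ n_filter n (Bits_filter (S n)).
Proof.
  intros Hn [_ Hnf]. set (xs := map unit_bits (seq 0 (S n))).
  assert (Hxs : forall a, In a xs <-> exists j, j < S n /\ a = unit_bits j).
  { intro a; unfold xs; rewrite in_map_iff; setoid_rewrite in_seq.
    split; intros [j [H1 H2]]; exists j; split; [lia|auto|auto|lia]. }
  assert (Hnodup : NoDup xs).
  { apply Injective_map_NoDup; [|apply seq_NoDup].
    intros j k E; apply (f_equal (fun a => a j)) in E; unfold unit_bits in E.
    rewrite Nat.eqb_refl in E; symmetry in E; now apply Nat.eqb_eq. }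
  assert (Hin : Bits_filter (S n) (meets xs)).
  { apply Hnf; [unfold xs; simpl; discriminate| |].
    - intros a Ha; destruct (proj1 (Hxs a) Ha) as [[|j] [_ ->]];
        [exists 1|exists 0]; split; (lia||reflexivity).
    - intros ys _ Hys Hlen; apply NNPP; intro Hnot.
      enough (incl xs ys) by (pose proof (NoDup_incl_length Hnodup H);
                              unfold xs in *; rewrite length_map, length_seq in *; lia).
      intros a Ha; destruct (proj1 (Hxs a) Ha) as [j [Hj ->]].
      assert (Hyj : meets ys j = true)
        by (destruct (meets ys j) eqn:E; [reflexivity|now contradict Hnot; exists j]).
      apply Bits_meets in Hyj as [b [Hb Hbj]].
      destruct (proj1 (Hxs b) (Hys b Hb)) as [k [_ ->]].
      unfold unit_bits in Hbj; apply Nat.eqb_eq in Hbj; now subst. }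
  destruct Hin as [i [Hi Hf]].
  enough (meets xs i = true) by congruence.
  apply Bits_meets; exists (unit_bits i); split; [apply Hxs; eauto|apply Nat.eqb_refl].
Qed.

Definition is_filter {A : uSL} (P : A -> Prop) : Prop :=
  P one /\ forall x y, P (meet x y) <-> P x /\ P y.

Definition chi {A : uSL} (P : nat -> A -> Prop) (x : A) : Bits :=
  fun i => if excluded_middle_informative (P i x) then false else true.

Lemma chi_false {A : uSL} (P : nat -> A -> Prop) x i : chi P x i = false <-> P i x.
Proof. unfold chi; destruct (excluded_middle_informative (P i x)); intuition discriminate. Qed.

Lemma chi_hom {A : uSL} (P : nat -> A -> Prop) : (forall i, is_filter (P i)) -> is_hom (chi P).
Proof.
  intro HP; split; [intros x y|]; apply functional_extensionality; intro i;
    destruct (HP i) as [H1 Hm]; simpl; unfold bor, chi.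
  - destruct (excluded_middle_informative (P i (meet x y))) as [H|H];
    destruct (excluded_middle_informative (P i x));
    destruct (excluded_middle_informative (P i y)); rewrite Hm in H; tauto.
  - now destruct (excluded_middle_informative (P i one)).
Qed.

Lemma Bits_filter_chi {A : uSL} n (P : nat -> A -> Prop) x :
  Bits_filter n (chi P x) <-> exists i, i < n /\ P i x.
Proof. unfold Bits_filter; now setoid_rewrite chi_false. Qed.

(** * Finitely generated upsets *)

Definition upset_gen {A : uSL} (gs : list A) (y : A) : Prop := exists g, In g gs /\ le g y.

Lemma upset_gen_mem (K : cls) (A : uSL) (F : A -> Prop) (gs : list A) :
  logical K -> K Bits (Bits_filter (length gs)) ->
  (forall y, F y <-> upset_gen gs y) -> K A F.
Proof.
  intros (_ & _ & _ & Hpre & _) HB HF.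
  set (P := fun i (y : A) => le (nth i gs one) y).
  apply (Hpre A Bits F (Bits_filter (length gs)) (chi P)); [|intro y|exact HB].
  - apply chi_hom; intro i; split; [apply sl_le_one|intros x y; apply le_meet_iff].
  - rewrite HF, Bits_filter_chi; unfold upset_gen, P; split.
    + intros [g [Hg Hgy]]; destruct (In_nth gs g one Hg) as [i [Hi <-]]; eauto.
    + intros [i [Hi Hiy]]; exists (nth i gs one); split; [apply nth_In|]; assumption.
Qed.

Lemma upset_gen_mem_all (K : cls) (A : uSL) (F : A -> Prop) (gs : list A) :
  logical K -> (forall n, 1 <= n -> subclass (uSL_n n) K) -> gs <> [] ->
  (forall y, F y <-> upset_gen gs y) -> K A F.
Proof.
  intros HK Hall Hgs HF; apply (upset_gen_mem K A F gs HK); [|exact HF].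
  assert (Hlen : 1 <= length gs) by (destruct gs; [congruence|simpl; lia]).
  exact (Hall _ Hlen _ _ (uSL_n_Bits _ Hlen)).
Qed.

Definition critical {A : uSL} (F : A -> Prop) (zs : list A) : Prop :=
  ~ F (meets zs) /\ forall ws, incl ws zs -> length ws < length zs -> F (meets ws).

Lemma critical_sublist {A : uSL} (F : A -> Prop) (xs : list A) :
  ~ F (meets xs) -> exists zs, incl zs xs /\ critical F zs.
Proof.
  intro Hxs.
  destruct (least_nat (fun k => exists zs, length zs = k /\ incl zs xs /\ ~ F (meets zs))
              (length xs)) as [k [[zs [<- [Hzs Hnot]]] Hleast]];
    [exists xs; auto using incl_refl|].
  exists zs; split; [exact Hzs|split; [exact Hnot|]].
  intros ws Hws Hlen; apply NNPP; intro Hnot'.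
  enough (length zs <= length ws) by lia.
  apply Hleast; exists ws; eauto using incl_tran.
Qed.

Lemma map_nth_seq {T : Type} (l : list T) d : map (fun i => nth i l d) (seq 0 (length l)) = l.
Proof.
  apply nth_ext with (d := d) (d' := d); rewrite length_map, length_seq; [reflexivity|].
  intros i Hi; rewrite (nth_indep _ _ (nth 0 l d)) by (rewrite length_map, length_seq; lia).
  etransitivity; [apply (map_nth (fun j => nth j l d))|now rewrite seq_nth].
Qed.

Lemma meets_map_if {A : uSL} {T : Type} (b : T -> bool) (f : T -> A) (ts : list T) :
  meets (map (fun t => if b t then f t else one) ts) = meets (map f (filter b ts)).
Proof.
  induction ts as [|t ts IH]; simpl; [reflexivity|].
  destruct (b t); simpl; rewrite IH; auto using one_meet.
Qed.

Definition Bits_eval {A : uSL} (zs : list A) (a : Bits) : A :=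
  meets (map (fun i => if a i then nth i zs one else one) (seq 0 (length zs))).

Lemma Bits_eval_hom {A : uSL} (zs : list A) : is_hom (Bits_eval zs).
Proof.
  split; unfold Bits_eval; simpl.
  - intros a b; rewrite <- meets_map_meet; f_equal; apply map_ext; intro i; unfold bor.
    destruct (a i), (b i); simpl; now rewrite ?meetI, ?meet1, ?one_meet.
  - apply meets_map_one.
Qed.

Lemma Bits_eval_filter {A : uSL} (zs : list A) (a : Bits) :
  Bits_eval zs a = meets (map (fun i => nth i zs one) (filter a (seq 0 (length zs)))).
Proof. apply meets_map_if. Qed.

Lemma Bits_eval_all {A : uSL} (zs : list A) (a : Bits) :
  (forall i, i < length zs -> a i = true) -> Bits_eval zs a = meets zs.
Proof.
  intro Ha; rewrite Bits_eval_filter, forallb_filter_id, map_nth_seq; [reflexivity|].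
  apply forallb_forall; intros i Hi; apply in_seq in Hi; apply Ha; lia.
Qed.

Lemma Bits_eval_some {A : uSL} (zs : list A) (a : Bits) i :
  i < length zs -> a i = false ->
  exists ws, incl ws zs /\ length ws < length zs /\ Bits_eval zs a = meets ws.
Proof.
  intros Hi Hai; rewrite Bits_eval_filter.
  eexists; split; [|split; [|reflexivity]].
  - intros y Hy; apply in_map_iff in Hy as [j [<- Hj]].
    apply filter_In in Hj as [Hj _]; apply in_seq in Hj; apply nth_In; lia.
  - rewrite length_map.
    assert (Hle := filter_length_le a (seq 0 (length zs))); rewrite length_seq in *.
    enough (length (filter a (seq 0 (length zs))) <> length zs) by lia.
    intro E; rewrite <- (length_seq (length zs) 0) in E at 2.
    apply filter_length_forallb in E; rewrite forallb_forall in E.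
    rewrite E in Hai; [discriminate|apply in_seq; lia].
Qed.

Lemma Bits_filter_of_critical (K : cls) (A : uSL) (F : A -> Prop) (zs : list A) :
  logical K -> K A F -> critical F zs -> K Bits (Bits_filter (length zs)).
Proof.
  intros (_ & _ & _ & Hpre & _) HAF [Hzs Hsub].
  apply (Hpre Bits A (Bits_filter (length zs)) F (Bits_eval zs));
    [apply Bits_eval_hom|intro a; split|exact HAF].
  - intros [i [Hi Hai]]; destruct (Bits_eval_some zs a i Hi Hai) as [ws [Hws [Hlen ->]]].
    now apply Hsub.
  - intro Ha; apply NNPP; intro Hno; apply Hzs; rewrite <- (Bits_eval_all zs a); [exact Ha|].
    intros i Hi; destruct (a i) eqn:E; [reflexivity|now contradict Hno; exists i].
Qed.

Lemma Bits_filter1_mem (K : cls) :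
  logical K -> ~ trivial_cls K -> subclass K uSL_inf -> K Bits (Bits_filter 1).
Proof.
  intros HK Hnt Hsub.
  assert (exists A F a, K A F /\ ~ F a) as (A & F & a & HAF & Ha).
  { apply NNPP; intro H; apply Hnt; intros A F HAF x; apply NNPP; intro Hx; apply H; eauto. }
  destruct (Hsub A F HAF) as [[x Fx] Hup].
  apply (Bits_filter_of_critical K A F [a] HK HAF); split.
  - simpl; now rewrite meet1.
  - intros [|w ws] _ Hlen; [exact (upset_one F x Hup Fx)|simpl in Hlen; lia].
Qed.

Lemma Bits_filter_of_not_n_filter (K : cls) (A : uSL) (F : A -> Prop) m :
  logical K -> subclass K uSL_inf -> K A F -> ~ n_filter m F ->
  exists c, m < c /\ K Bits (Bits_filter c).
Proof.
  intros HK Hsub HAF Hnf; destruct (Hsub A F HAF) as [[x Fx] Hup].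
  assert (exists xs, xs <> [] /\ (forall y, In y xs -> F y) /\
            (forall ys, ys <> [] -> incl ys xs -> length ys <= m -> F (meets ys)) /\
            ~ F (meets xs)) as (xs & _ & _ & Hsmall & Hxs).
  { apply NNPP; intro H; apply Hnf; split; [exact Hup|].
    intros xs H1 H2 H3; apply NNPP; intro H4; apply H; exists xs; auto. }
  destruct (critical_sublist F xs Hxs) as [zs [Hzs Hcrit]].
  exists (length zs); split; [|exact (Bits_filter_of_critical K A F zs HK HAF Hcrit)].
  destruct (Nat.lt_ge_cases m (length zs)) as [|Hle]; [assumption|exfalso].
  apply (proj1 Hcrit), Hsmall; [|eauto using incl_tran|exact Hle].
  intros ->; exact (proj1 Hcrit (upset_one F x Hup Fx)).
Qed.

(** * Every n-filter comes from [B_n] *)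

(* Finite subsets of [A], each carrying its meet, form a unital semilattice
   under union that maps homomorphically onto [A]. *)
Record fsub (A : uSL) := FSub {
  fs_val : A;
  fs_mem : A -> Prop;
  fs_fin : exists l, (forall y, fs_mem y <-> In y l) /\ fs_val = meets l
}.
Arguments fs_val {A}.
Arguments fs_mem {A}.

Lemma fsub_eq {A : uSL} (c d : fsub A) :
  fs_val c = fs_val d -> (forall y, fs_mem c y <-> fs_mem d y) -> c = d.
Proof.
  destruct c as [x Z Hc], d as [x' Z' Hd]; simpl; intros <- HZ.
  assert (Z = Z') as <-
    by (apply functional_extensionality; intro y; apply propositional_extensionality, HZ).
  f_equal; apply proof_irrelevance.
Qed.

Definition fs_union {A : uSL} (c d : fsub A) : fsub A.
Proof.
  refine (FSub A (meet (fs_val c) (fs_val d)) (fun y => fs_mem c y \/ fs_mem d y) _).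
  destruct c as [x Z [l1 [H1 ->]]], d as [x' Z' [l2 [H2 ->]]]; simpl.
  exists (l1 ++ l2); split; [intro y; rewrite in_app_iff, H1, H2; tauto|].
  symmetry; apply meets_app.
Defined.

Definition fs_empty (A : uSL) : fsub A.
Proof. refine (FSub A one (fun _ => False) _); exists []; simpl; tauto. Defined.

Definition fs_single {A : uSL} (y : A) : fsub A.
Proof.
  refine (FSub A y (fun z => z = y) _); exists [y]; simpl; split; [firstorder congruence|].
  symmetry; apply meet1.
Defined.

Lemma fs_unionA {A : uSL} (c d e : fsub A) : fs_union c (fs_union d e) = fs_union (fs_union c d) e.
Proof. apply fsub_eq; simpl; [apply meetA|tauto]. Qed.
Lemma fs_unionC {A : uSL} (c d : fsub A) : fs_union c d = fs_union d c.
Proof. apply fsub_eq; simpl; [apply meetC|tauto]. Qed.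
Lemma fs_unionI {A : uSL} (c : fsub A) : fs_union c c = c.
Proof. apply fsub_eq; simpl; [apply meetI|tauto]. Qed.
Lemma fs_union0 {A : uSL} (c : fsub A) : fs_union c (fs_empty A) = c.
Proof. apply fsub_eq; simpl; [apply meet1|tauto]. Qed.

Definition Fsub (A : uSL) : uSL :=
  {| car := fsub A; meet := fs_union; one := fs_empty A;
     meetA := fs_unionA; meetC := fs_unionC; meetI := fs_unionI; meet1 := fs_union0 |}.

Lemma fs_mem_upset {A : uSL} (G : A -> Prop) (c : fsub A) :
  upset G -> G (fs_val c) -> forall y, fs_mem c y -> G y.
Proof.
  destruct c as [x Z [l [HZ ->]]]; simpl; intros HG Gx y Hy.
  exact (upset_meets G l y HG Gx (proj1 (HZ y) Hy)).
Qed.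

Definition fs_within {A : uSL} (S : A -> Prop) (c : Fsub A) : Prop :=
  forall y, fs_mem c y -> S y.

Lemma fs_within_filter {A : uSL} (S : A -> Prop) : is_filter (fs_within S).
Proof. split; [now intros y|intros c d; unfold fs_within; simpl; firstorder]. Qed.

(* If [~ G (fs_val w)], [n] sets [S_i] separate [w] from the lifted filter:
   for nonempty [w] inside [G] take [S_i = G \ {y_i}] for a subfamily
   [y_0, ..., y_(n-1)] of [w] with meet outside [G]. *)
Lemma n_filter_separation {A : uSL} (G : A -> Prop) n (w : fsub A) :
  1 <= n -> G one -> n_filter n G -> ~ G (fs_val w) ->
  exists S : nat -> A -> Prop,
    (forall c : fsub A, G (fs_val c) -> exists i, i < n /\ fs_within (S i) c) /\
    (forall i, i < n -> ~ fs_within (S i) w).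
Proof.
  intros Hn Gone [Hup Hnf] Hw.
  destruct w as [x Z [l [HZ ->]]]; unfold fs_within; simpl in *.
  destruct (classic (forall y, In y l -> G y)) as [Hl|Hl].
  - assert (exists ys, ys <> [] /\ incl ys l /\ length ys <= n /\ ~ G (meets ys))
      as (ys & Hne & Hys & Hlen & Hnot).
    { apply NNPP; intro H; apply Hw, Hnf; [intros ->; exact (Hw Gone)|exact Hl|].
      intros ys ? ? ?; apply NNPP; intro; apply H; eauto. }
    set (d := nth 0 ys one).
    exists (fun i y => G y /\ y <> nth i ys d); split.
    + intros c Hc; apply NNPP; intro Hno; apply Hnot.
      assert (Hys_c : forall y, In y ys -> fs_mem c y).
      { intros y Hy; destruct (In_nth ys y d Hy) as [i [Hi <-]].
        apply NNPP; intro Hy'; apply Hno; exists i; split; [lia|].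
        intros y' Hy'2; split; [exact (fs_mem_upset G c Hup Hc y' Hy'2)|now intros ->]. }
      apply (Hup _ _ Hc); destruct c as [xc Zc [lc [HZc ->]]]; simpl in *.
      apply meets_incl; intros y Hy; apply HZc, Hys_c, Hy.
    + intros i Hi Hsub.
      assert (In (nth i ys d) ys) as Hin.
      { destruct (Nat.lt_ge_cases i (length ys)); [now apply nth_In|].
        rewrite nth_overflow by lia; unfold d; apply nth_In; destruct ys; [congruence|simpl; lia]. }
      exact (proj2 (Hsub _ (proj2 (HZ _) (Hys _ Hin))) eq_refl).
  - apply not_all_ex_not in Hl as [y0 Hy0].
    exists (fun _ => G); split.
    + intros c Hc; exists 0; split; [lia|exact (fs_mem_upset G c Hup Hc)].
    + intros i _ Hsub; apply Hy0; intro Hin; exact (Hsub y0 (proj2 (HZ y0) Hin)).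
Qed.


(* [<A, G>] is the strict image of the lifted structure [<Fsub A, G o fs_val>],
   which is a strict preimage of a power of [B_n]. *)
Lemma uSL_n_sub_of_Bits (K : cls) n :
  logical K -> 1 <= n -> K Bits (Bits_filter n) -> subclass (uSL_n n) K.
Proof.
  intros (_ & _ & Hprod & Hpre & Himg) Hn HB A G [[x Gx] HG].
  set (W := {w : fsub A | ~ G (fs_val w)}).
  destruct (choice (fun (w : W) (S : nat -> A -> Prop) =>
              (forall c, G (fs_val c) -> exists i, i < n /\ fs_within (S i) c) /\
              forall i, i < n -> ~ fs_within (S i) (proj1_sig w))) as [S HS].
  { intros [w Hw]; exact (n_filter_separation G n w Hn (upset_one G x (proj1 HG) Gx) HG Hw). }
  assert (KC : K (Fsub A) (fun c => G (fs_val c))).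
  { apply (Hpre _ (prod_uSL W (fun _ => Bits)) _ (fun a => forall w, Bits_filter n (a w))
             (fun c w => chi (fun i => fs_within (S w i)) c)).
    - apply hom_into_prod; intro w; apply chi_hom; intro i; apply fs_within_filter.
    - intro c; setoid_rewrite Bits_filter_chi; split.
      + intros Hc w; exact (proj1 (HS w) c Hc).
      + intro Hall; apply NNPP; intro Hc.
        destruct (Hall (exist _ c Hc)) as [i [Hi Hsub]]; exact (proj2 (HS _) i Hi Hsub).
    - apply (Hprod W (fun _ => Bits) (fun _ => Bits_filter n)); intros _; exact HB. }
  apply (Himg (Fsub A) A (fun c => G (fs_val c)) G fs_val);
    [split; reflexivity|intro y; now exists (fs_single y)|intro c; reflexivity|exact KC].
Qed.

(** * The dichotomy *)

Lemma n_filter_mono {A : uSL} (F : A -> Prop) n n' : n <= n' -> n_filter n F -> n_filter n' F.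
Proof.
  intros Hle [Hup Hnf]; split; [exact Hup|].
  intros xs Hne Hxs Hsmall; apply Hnf; auto.
  intros ys ? ? ?; apply Hsmall; auto; lia.
Qed.

Lemma uSL_n_succ_sub (K : cls) m :
  logical K -> subclass K uSL_inf -> ~ subclass K (uSL_n m) -> subclass (uSL_n (S m)) K.
Proof.
  intros HK Hsub Hnsub.
  assert (exists A F, K A F /\ ~ uSL_n m A F) as (A & F & HAF & HnF).
  { apply NNPP; intro H; apply Hnsub; intros A F HAF; apply NNPP; intro; apply H; eauto. }
  destruct (Hsub A F HAF) as [Hne Hup].
  destruct (Bits_filter_of_not_n_filter K A F m HK Hsub HAF) as [c [Hc HB]];
    [intro; apply HnF; now split|].
  intros B G [HGne HG]; apply (uSL_n_sub_of_Bits K c HK); [lia|exact HB|].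
  split; [exact HGne|exact (n_filter_mono G (S m) c Hc HG)].
Qed.

Lemma uSL_n_sub_below (K : cls) n :
  logical K -> ~ trivial_cls K -> subclass K uSL_inf -> 1 <= n ->
  (forall k, 1 <= k < n -> ~ subclass K (uSL_n k)) -> subclass (uSL_n n) K.
Proof.
  intros HK Hnt Hsub Hn Hbelow.
  destruct n as [|[|m]]; [lia| |].
  - exact (uSL_n_sub_of_Bits K 1 HK Hn (Bits_filter1_mem K HK Hnt Hsub)).
  - apply (uSL_n_succ_sub K (S m) HK Hsub), Hbelow; lia.
Qed.

Lemma dichotomy (K : cls) :
  logical K -> ~ trivial_cls K -> subclass K uSL_inf ->
  (forall n, 1 <= n -> subclass (uSL_n n) K) \/
  exists n, 1 <= n /\ same_class K (uSL_n n).
Proof.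
  intros HK Hnt Hsub.
  destruct (classic (exists n, 1 <= n /\ subclass K (uSL_n n))) as [[n0 Hn0]|Hnone].
  - destruct (least_nat (fun n => 1 <= n /\ subclass K (uSL_n n)) n0 Hn0)
      as [n [[Hn HKn] Hleast]].
    right; exists n; split; [exact Hn|intros A F; split; [apply HKn|]].
    apply (uSL_n_sub_below K n HK Hnt Hsub Hn).
    intros k Hk HKk; specialize (Hleast k (conj (proj1 Hk) HKk)); lia.
  - left; intros n Hn; apply (uSL_n_sub_below K n HK Hnt Hsub Hn).
    intros k Hk HKk; apply Hnone; exists k; split; [lia|exact HKk].
Qed.

Lemma uSL_omega_sub (K : cls) :
  logical K -> (forall n, 1 <= n -> subclass (uSL_n n) K) -> subclass uSL_omega K.
Proof.
  intros HK Hall A F [[x Fx] (J & B & h & G & Hfin & Hh & HG & HF)].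
  assert (KB : forall j, K (B j) (G j)).
  { intro j; destruct (Hfin j) as [l Hl], (list_sep (G j) l) as [gs Hgs].
    apply (upset_gen_mem_all K (B j) (G j) gs HK Hall).
    - intros ->; exact (proj2 (Hgs (h j x)) (conj (Hl _) (proj1 (HF x) Fx j))).
    - intro y; split.
      + intro Gy; exists y; split; [apply Hgs; auto|apply sl_le_refl].
      + intros [g [Hg Hgy]]; exact (HG j g y (proj2 (proj1 (Hgs g) Hg)) Hgy). }
  destruct HK as (_ & _ & Hprod & Hpre & _).
  apply (Hpre A (prod_uSL J B) F (fun a => forall j, G j (a j)) (fun x j => h j x));
    [apply hom_into_prod, Hh|exact HF|exact (Hprod J B G KB)].
Qed.

(** * Ultraproducts *)

Definition set_filter {I : Type} (U : (I -> Prop) -> Prop) : Prop :=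
  U (fun _ => True) /\
  (forall X Y : I -> Prop, U X -> (forall i, X i -> Y i) -> U Y) /\
  (forall X Y : I -> Prop, U X -> U Y -> U (fun i => X i /\ Y i)).

Lemma ultrafilter_set_filter {I : Type} (U : (I -> Prop) -> Prop) :
  ultrafilter U -> set_filter U.
Proof.
  intros (H0 & Hmono & Hand & Hcompl); split; [|split; assumption].
  destruct (Hcompl (fun _ => False)) as [H|H]; [contradiction|apply (Hmono _ _ H); tauto].
Qed.

Section SetFilter.
Context {I : Type} (U : (I -> Prop) -> Prop) (HU : set_filter U).

Lemma U_mono (X Y : I -> Prop) : U X -> (forall i, X i -> Y i) -> U Y.
Proof. destruct HU as (_ & H & _); eauto. Qed.

Lemma U_and (X Y : I -> Prop) : U X -> U Y -> U (fun i => X i /\ Y i).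
Proof. destruct HU as (_ & _ & H); eauto. Qed.

Lemma U_forall_list {T : Type} (ts : list T) (X : T -> I -> Prop) :
  (forall t, In t ts -> U (X t)) -> U (fun i => forall t, In t ts -> X t i).
Proof.
  induction ts as [|t ts IH]; intro H.
  - apply (U_mono _ _ (proj1 HU)); simpl; tauto.
  - apply (U_mono _ _ (U_and _ _ (H t (or_introl eq_refl)) (IH (fun s Hs => H s (or_intror Hs))))).
    intros i [Ht Hts] s [<-|Hs]; auto.
Qed.

End SetFilter.

Lemma ultrafilter_extends {T : Type} (F0 : (T -> Prop) -> Prop) :
  F0 (fun _ => True) ->
  (forall X Y, F0 X -> F0 Y -> F0 (fun i => X i /\ Y i)) ->
  (forall X Y, F0 X -> (forall i, X i -> Y i) -> F0 Y) ->
  ~ F0 (fun _ => False) ->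
  exists U, ultrafilter U /\ forall X, F0 X -> U X.
Proof.
  intros HT HI HS H0.
  assert (PF : filter.ProperFilter F0)
    by (constructor; [exact H0|constructor; [exact HT|exact HI|intros P Q HPQ HP; eauto]]).
  destruct (filter.ultraFilterLemma PF) as [G [UG sub]].
  exists G; split; [|exact sub].
  pose proof (@filter.ultra_proper _ _ UG) as PG.
  split; [|split; [|split]].
  - exact (@filter.filter_not_empty _ _ PG).
  - intros X Y GX HXY; exact (@filter.filterS _ _ (@filter.filter_filter _ _ PG) X Y HXY GX).
  - intros X Y GX GY; exact (@filter.filterI _ _ (@filter.filter_filter _ _ PG) X Y GX GY).
  - intro X; exact (filter.in_ultra_setVsetC X UG).
Qed.

Section Ultraproduct.
Context {I : Type} (A : I -> uSL) (U : (I -> Prop) -> Prop) (HU : ultrafilter U).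
Let HUf : set_filter U := ultrafilter_set_filter U HU.

Definition U_eq (a b : prod_uSL I A) : Prop := U (fun i => a i = b i).

Lemma U_eq_refl a : U_eq a a.
Proof. apply (U_mono U HUf _ _ (proj1 HUf)); auto. Qed.

Lemma U_eq_sym a b : U_eq a b -> U_eq b a.
Proof. intro H; apply (U_mono U HUf _ _ H); auto. Qed.

Lemma U_eq_trans a b c : U_eq a b -> U_eq b c -> U_eq a c.
Proof.
  intros H1 H2; apply (U_mono U HUf _ _ (U_and U HUf _ _ H1 H2)).
  now intros i [-> ->].
Qed.

Definition uclass : Type := {S : prod_uSL I A -> Prop | exists a, S = U_eq a}.

Definition ucls (a : prod_uSL I A) : uclass := exist _ (U_eq a) (ex_intro _ a eq_refl).

Definition urep (s : uclass) : prod_uSL I A :=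
  proj1_sig (constructive_indefinite_description _ (proj2_sig s)).

Lemma ucls_urep s : ucls (urep s) = s.
Proof.
  unfold urep; destruct (constructive_indefinite_description _ _) as [a Ha]; simpl.
  destruct s as [S HS]; simpl in *; subst S; unfold ucls; f_equal; apply proof_irrelevance.
Qed.

Lemma ucls_eq a b : ucls a = ucls b <-> U_eq a b.
Proof.
  split.
  - intro E; apply (f_equal (@proj1_sig _ _)) in E; simpl in E; rewrite E; apply U_eq_refl.
  - intro Hab; apply subset_eq_compat.
    apply functional_extensionality; intro c; apply propositional_extensionality.
    split; intro H; eauto using U_eq_trans, U_eq_sym.
Qed.

Lemma urep_ucls a : U_eq (urep (ucls a)) a.
Proof. apply ucls_eq; now rewrite ucls_urep. Qed.

Lemma ucls_surj : surj ucls.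
Proof. intro s; exists (urep s); apply ucls_urep. Qed.

Definition umeet (s t : uclass) : uclass := ucls (pmeet I A (urep s) (urep t)).

Lemma umeet_ucls a b : umeet (ucls a) (ucls b) = ucls (pmeet I A a b).
Proof.
  apply ucls_eq; pose proof (urep_ucls a) as Ha; pose proof (urep_ucls b) as Hb.
  apply (U_mono U HUf _ _ (U_and U HUf _ _ Ha Hb)).
  intros i [Ei Fi]; unfold pmeet; now rewrite Ei, Fi.
Qed.

Ltac ucls_cases :=
  repeat match goal with s : uclass |- _ => destruct (ucls_surj s) as [? <-]; clear s end;
  rewrite ?umeet_ucls.

Lemma umeetA s t r : umeet s (umeet t r) = umeet (umeet s t) r.
Proof. ucls_cases; f_equal; apply pmeetA. Qed.
Lemma umeetC s t : umeet s t = umeet t s.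
Proof. ucls_cases; f_equal; apply pmeetC. Qed.
Lemma umeetI s : umeet s s = s.
Proof. ucls_cases; f_equal; apply pmeetI. Qed.
Lemma umeet1 s : umeet s (ucls (pone I A)) = s.
Proof. ucls_cases; f_equal; apply pmeet1. Qed.

Definition ultraproduct : uSL :=
  {| car := uclass; meet := umeet; one := ucls (pone I A);
     meetA := umeetA; meetC := umeetC; meetI := umeetI; meet1 := umeet1 |}.

Lemma ucls_hom : @is_hom (prod_uSL I A) ultraproduct ucls.
Proof. split; [intros a b; symmetry; apply umeet_ucls|reflexivity]. Qed.

Definition ulimit (F : forall i, A i -> Prop) (s : ultraproduct) : Prop :=
  U (fun i => F i (urep s i)).

Lemma ulimit_ucls (F : forall i, A i -> Prop) a : ulimit F (ucls a) <-> U (fun i => F i (a i)).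
Proof.
  unfold ulimit; pose proof (urep_ucls a) as E.
  split; intro H; apply (U_mono U HUf _ _ (U_and U HUf _ _ H E)); intros i [Hi Ei];
    congruence.
Qed.

End Ultraproduct.

Lemma finitary_ultraproduct (K : cls) {I : Type} (A : I -> uSL) (F : forall i, A i -> Prop)
    (U : (I -> Prop) -> Prop) (HU : ultrafilter U) :
  finitary K -> (forall i, K (A i) (F i)) -> K (ultraproduct A U HU) (ulimit A U HU F).
Proof.
  intros Hfin HK; apply (Hfin I A F U (ultraproduct A U HU) _ (ucls A U)).
  - exact HU.
  - exact HK.
  - apply ucls_hom.
  - apply ucls_surj.
  - intros a b; apply ucls_eq, HU.
  - intro a; apply ulimit_ucls.
Qed.

(* An upset [F] is the diagonal preimage of an ultraproduct, indexed by finite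
   subsets [l], of the upsets generated by [1] and [F] restricted to [l]. *)
Lemma uSL_inf_sub (K : cls) :
  logical K -> finitary K -> (forall n, 1 <= n -> subclass (uSL_n n) K) ->
  subclass uSL_inf K.
Proof.
  intros HK Hfin Hall A F [[x Fx] Hup].
  set (Fl := fun (l : list A) (y : A) => exists g, (one = g \/ In g l /\ F g) /\ le g y).
  assert (KFl : forall l, K A (Fl l)).
  { intro l; destruct (list_sep F l) as [gs Hgs].
    apply (upset_gen_mem_all K A (Fl l) (one :: gs) HK Hall); [discriminate|].
    intro y; unfold Fl, upset_gen; simpl; now setoid_rewrite Hgs. }
  destruct (ultrafilter_extends (fun X : list A -> Prop => exists l, forall l', incl l l' -> X l'))
    as [U [HU Hcofinal]].
  - now exists [].
  - intros X Y [l1 H1] [l2 H2]; exists (l1 ++ l2); intros l' Hl; split;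
      [apply H1|apply H2]; intros z Hz; apply Hl, in_app_iff; auto.
  - intros X Y [l H] HXY; exists l; auto.
  - intros [l H]; exact (H l (incl_refl l)).
  - pose proof (ultrafilter_set_filter U HU) as HUf.
    destruct HK as (_ & _ & _ & Hpre & _).
    set (B := ultraproduct (fun _ : list A => A) U HU).
    set (diag := fun y : A => ucls (fun _ => A) U (fun _ => y) : B).
    apply (Hpre A B F (ulimit _ U HU Fl) diag);
      [|intro y|exact (finitary_ultraproduct K _ Fl U HU Hfin KFl)].
    { split; [intros y z; symmetry; apply umeet_ucls, HU|reflexivity]. }
    unfold diag; rewrite ulimit_ucls by exact HU; split.
    + intro Fy; apply (U_mono U HUf (fun l => In y l)).
      * apply Hcofinal; exists [y]; intros l' Hl; apply Hl; now left.
      * intros l Hl; exists y; split; [now right|apply sl_le_refl].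
    + intro H; apply NNPP; intro Fy; apply (proj1 HU), (U_mono U HUf _ _ H).
      intros l [g [[<-|[_ Fg]] Hgy]]; apply Fy.
      * rewrite (le_one_eq y Hgy); exact (upset_one F x Hup Fx).
      * exact (Hup g y Fg Hgy).
Qed.

(** * The classes [uSL_n] *)

Fixpoint words {T : Type} (xs : list T) (k : nat) : list (list T) :=
  match k with
  | 0 => [[]]
  | S k => [] :: flat_map (fun w => map (fun a => a :: w) xs) (words xs k)
  end.

Lemma In_words {T : Type} (xs : list T) k ys :
  In ys (words xs k) <-> incl ys xs /\ length ys <= k.
Proof.
  revert ys; induction k as [|k IH]; intros [|y ys]; simpl.
  - split; [split; [apply incl_nil_l|lia]|auto].
  - split; [intros [H|[]]; discriminate|intros [_ H]; lia].
  - split; [split; [apply incl_nil_l|lia]|auto].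
  - rewrite in_flat_map; setoid_rewrite in_map_iff. split.
    + intros [H|[w [Hw [a [Ea Ha]]]]]; [discriminate|]; injection Ea as <- <-.
      apply IH in Hw as [Hws Hlen]; split; [now apply incl_cons|lia].
    + intros [Hys Hlen]; right; exists ys; split.
      { apply IH; split; [eapply incl_cons_inv; eauto|lia]. }
      exists y; split; [reflexivity|exact (Hys y (or_introl eq_refl))].
Qed.

(* A reduced product of n-filters along homomorphisms is an n-filter; this covers
   strict preimages ([U] principal), products ([U] = everywhere) and ultraproducts. *)
Lemma n_filter_reduced n {I : Type} {A : uSL} (B : I -> uSL) (h : forall i, A -> B i)
    (G : forall i, B i -> Prop) (U : (I -> Prop) -> Prop) (F : A -> Prop) :
  set_filter U -> (forall i, is_hom (h i)) -> (forall i, n_filter n (G i)) ->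
  (forall x, F x <-> U (fun i => G i (h i x))) -> n_filter n F.
Proof.
  intros HU Hh HG HF; split.
  - intros x y Fx Hxy; apply HF; apply HF in Fx; apply (U_mono U HU _ _ Fx).
    intros i Gx; exact (proj1 (HG i) _ _ Gx (hom_le (h i) x y (Hh i) Hxy)).
  - intros xs Hne Hxs Hsmall; apply HF.
    assert (Hall : U (fun i => forall x, In x xs -> G i (h i x)))
      by (apply (U_forall_list U HU); intros x Hx; apply HF, Hxs, Hx).
    assert (Hwords : U (fun i => forall ys, In ys (words xs n) -> ys <> [] ->
                                          G i (h i (meets ys)))).
    { apply (U_forall_list U HU (words xs n) (fun ys i => ys <> [] -> G i (h i (meets ys)))).
      intros ys Hys; apply In_words in Hys as [Hincl Hlen].
      destruct ys as [|y ys]; [apply (U_mono U HU _ _ (proj1 HU)); congruence|].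
      apply (U_mono U HU (fun i => G i (h i (meets (y :: ys))))); [|auto].
      apply HF, Hsmall; [discriminate|exact Hincl|exact Hlen]. }
    apply (U_mono U HU _ _ (U_and U HU _ _ Hall Hwords)); intros i [Hi Hwi].
    rewrite hom_meets by apply Hh; apply (HG i).
    + destruct xs; [congruence|discriminate].
    + intros y Hy; apply in_map_iff in Hy as [x [<- Hx]]; auto.
    + intros ys' Hne' Hincl Hlen; destruct (lift_incl_map (h i) xs ys' Hincl) as [ys [<- Hys]].
      rewrite <- hom_meets by apply Hh; apply Hwi; [|now intros ->].
      apply In_words; rewrite length_map in Hlen; auto.
Qed.

Lemma n_filter_image n {A B : uSL} (F : A -> Prop) (G : B -> Prop) (h : A -> B) :
  is_hom h -> surj h -> strict h F G -> n_filter n F -> n_filter n G.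
Proof.
  intros Hh Hsurj HFG [Hup Hnf]; split.
  - intros x y Gx Hxy; destruct (Hsurj x) as [a <-], (Hsurj y) as [b <-].
    apply HFG, (Hup (meet a b)); [|apply meet_le_r].
    apply HFG; rewrite (proj1 Hh); unfold le in Hxy; now rewrite Hxy.
  - intros xs Hne Hxs Hsmall; destruct (lift_surj h xs Hsurj) as [as_ <-].
    rewrite <- hom_meets by exact Hh; apply HFG, Hnf.
    + destruct as_; [contradiction|discriminate].
    + intros a Ha; apply HFG, Hxs, in_map, Ha.
    + intros ys Hne' Hincl Hlen; apply HFG; rewrite hom_meets by exact Hh.
      apply Hsmall; [destruct ys; [contradiction|discriminate]| |now rewrite length_map].
      intros y Hy; apply in_map_iff in Hy as [a [<- Ha]]; apply in_map, Hincl, Ha.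
Qed.

Lemma uSL_n_logical n : logical (uSL_n n).
Proof.
  assert (Hpre : forall (A B : uSL) F G (h : A -> B),
             is_hom h -> strict h F G -> uSL_n n B G -> uSL_n n A F).
  { intros A B F G h Hh HFG [[y Gy] HG]; split.
    - exists one; apply HFG; rewrite (proj2 Hh); exact (upset_one G y (proj1 HG) Gy).
    - apply (n_filter_reduced n (fun _ : unit => B) (fun _ => h) (fun _ => G) (fun X => X tt));
        [repeat split; firstorder|auto|auto|exact HFG]. }
  assert (Himg : forall (A B : uSL) F G (h : A -> B),
             is_hom h -> surj h -> strict h F G -> uSL_n n A F -> uSL_n n B G).
  { intros A B F G h Hh Hsurj HFG [[x Fx] HF]; split;
      [exists (h x); apply HFG, Fx|exact (n_filter_image n F G h Hh Hsurj HFG HF)]. }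
  split; [|split; [|split; [|split]]]; eauto.
  intros I A F HF; split.
  - exists (pone I A); intro i; destruct (HF i) as [[x Fx] [Hup _]]; exact (upset_one _ x Hup Fx).
  - apply (n_filter_reduced n A (fun i (a : prod_uSL I A) => a i) F (fun X => forall i, X i));
      [repeat split; firstorder|split; reflexivity|intro i; apply HF|reflexivity].
Qed.

Lemma uSL_n_finitary n : finitary (uSL_n n).
Proof.
  intros I A F U B G q HU HF Hq Hsurj _ HG.
  assert (HUf := ultrafilter_set_filter U HU).
  split.
  - exists (q (pone I A)); apply HG, (U_mono U HUf _ _ (proj1 HUf)).
    intros i _; destruct (HF i) as [[x Fx] [Hup _]]; exact (upset_one _ x Hup Fx).
  - apply (n_filter_image n (fun a => G (q a)) G q Hq Hsurj (fun a => iff_refl _)).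
    apply (n_filter_reduced n A (fun i (a : prod_uSL I A) => a i) F U); auto.
    + intro i; split; reflexivity.
    + intro i; apply HF.
Qed.

Lemma uSL_n_nontrivial n : 1 <= n -> ~ trivial_cls (uSL_n n).
Proof.
  intros Hn Htriv.
  destruct (Htriv Bits (Bits_filter n) (uSL_n_Bits n Hn) (fun _ => true)) as [i [_ Hi]].
  discriminate.
Qed.

Lemma uSL_n_proper n : 1 <= n -> ~ subclass uSL_inf (uSL_n n).
Proof.
  intros Hn Hinf; apply (Bits_filter_not_n_filter n Hn).
  refine (proj2 (Hinf Bits (Bits_filter (S n)) _)).
  split; [exists (@one Bits), 0; split; [lia|reflexivity]|apply Bits_filter_upset].
Qed.

Lemma logical_same_class (K L : cls) : same_class K L -> logical L -> logical K.
Proof.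
  intros E (Hiso & Hsub & Hprod & Hpre & Himg).
  split; [|split; [|split; [|split]]].
  - intros A B F G h Hh Hinj Hsurj HFG HAF; apply E, (Hiso A B F G h); auto; apply E, HAF.
  - intros A B F G e He Hinj HGF HAF; apply E, (Hsub A B F G e); auto; apply E, HAF.
  - intros I A F HF; apply E, Hprod; intro i; apply E, HF.
  - intros A B F G h Hh HFG HBG; apply E, (Hpre A B F G h); auto; apply E, HBG.
  - intros A B F G h Hh Hsurj HFG HAF; apply E, (Himg A B F G h); auto; apply E, HAF.
Qed.

Lemma finitary_same_class (K L : cls) : same_class K L -> finitary L -> finitary K.
Proof. intros E Hfin I A F U B G q HU HK **; apply E; eapply Hfin; eauto; intro i; apply E, HK. Qed.

Theorem mainTheorem15 :
  (forall K : cls,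
     logical K -> ~ trivial_cls K -> subclass K uSL_inf ->
     subclass uSL_omega K \/ exists n : nat, 1 <= n /\ same_class K (uSL_n n)) /\
  (forall K : cls,
     (logical K /\ finitary K /\ ~ trivial_cls K /\ subclass K uSL_inf /\
      ~ subclass uSL_inf K)
     <-> exists n : nat, 1 <= n /\ same_class K (uSL_n n)).
Proof.
  split.
  - intros K HK Hnt Hsub.
    destruct (dichotomy K HK Hnt Hsub) as [Hall|Hn]; [left|right; exact Hn].
    exact (uSL_omega_sub K HK Hall).
  - intro K; split.
    + intros (HK & Hfin & Hnt & Hsub & Hproper).
      destruct (dichotomy K HK Hnt Hsub) as [Hall|Hn]; [|exact Hn].
      contradiction (Hproper (uSL_inf_sub K HK Hfin Hall)).
    + intros [n [Hn HKn]]; split; [|split; [|split; [|split]]].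
      * exact (logical_same_class _ _ HKn (uSL_n_logical n)).
      * exact (finitary_same_class _ _ HKn (uSL_n_finitary n)).
      * intro Htriv; apply (uSL_n_nontrivial n Hn); intros A F HAF; apply Htriv, HKn, HAF.
      * intros A F HAF; destruct (proj1 (HKn A F) HAF) as [Hne [Hup _]]; now split.
      * intro Hinf; apply (uSL_n_proper n Hn); intros A F HAF; apply HKn, Hinf, HAF.
Qed.
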